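(* Let $S$ be a simply cancellative skew lattice, let $A,B,M,J$ be four distinct $\mathcal{D}$-classes of $S$ with $M=A\wedge B$ and $J=A\vee B$ in the lattice $S/\mathcal{D}$, and let $x_1,x_2\in A$. (i) If $S$ is upper symmetric and $B\vee x_1\vee B=B\vee x_2\vee B$, then $M\vee x_1\vee M=M\vee x_2\vee M$. (ii) If $S$ is lower symmetric and $B\wedge x_1\wedge B=B\wedge x_2\wedge B$, then $J\wedge x_1\wedge J=J\wedge x_2\wedge J$.
   Context: A skew lattice is a set $S$ with two binary operations $\wedge,\vee$, each idempotent and associative, satisfying the absorption laws $x\wedge(x\vee y)=x=x\vee(x\wedge y)$ and $(x\wedge y)\vee y=y=(x\vee y)\wedge y$ for all $x,y\in S$. On a skew lattice, $x\,\mathcal{D}\,y$ means $x\wedge y\wedge x=x$ and $y\wedge x\wedge y=y$; $\mathcal{D}$ is a congruence and $S/\mathcal{D}$ is a lattice whose elements are the $\mathcal{D}$-classes. For subsets $C\subseteq S$ and $x\in S$, $C\vee x\vee C=\{c\vee x\vee c' : c,c'\in C\}$ and $C\wedge x\wedge C=\{c\wedge x\wedge c' : c,c'\in C\}$. $S$ is simply cancellative if ($z\vee x\vee z=z\vee y\vee z$ and $z\wedge x\wedge z=z\wedge y\wedge z$) $\Rightarrow x=y$. $S$ is upper symmetric if $x\wedge y=y\wedge x$ implies $x\vee y=y\vee x$, and lower symmetric if $x\vee y=y\vee x$ implies $x\wedge y=y\wedge x$. *)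

Set Implicit Arguments.

Record skew_lattice := SkewLattice {
  car :> Type;
  meet : car -> car -> car;
  join : car -> car -> car;
  meet_idem : forall x, meet x x = x;
  join_idem : forall x, join x x = x;
  meet_assoc : forall x y z, meet x (meet y z) = meet (meet x y) z;
  join_assoc : forall x y z, join x (join y z) = join (join x y) z;
  absorb_meet_join : forall x y, meet x (join x y) = x;
  absorb_join_meet : forall x y, join x (meet x y) = x;
  absorb_join_meet_r : forall x y, join (meet x y) y = y;
  absorb_meet_join_r : forall x y, meet (join x y) y = y
}.

Arguments meet {s} _ _.
Arguments join {s} _ _.

Section Defs.
Variable S : skew_lattice.

Definition Drel (x y : S) : Prop :=
  meet x (meet y x) = x /\ meet y (meet x y) = y.

Definition Dclass (a : S) : S -> Prop := fun y => Drel y a.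

Definition join_sand (C : S -> Prop) (x : S) : S -> Prop :=
  fun z => exists c c', C c /\ C c' /\ z = join c (join x c').

Definition meet_sand (C : S -> Prop) (x : S) : S -> Prop :=
  fun z => exists c c', C c /\ C c' /\ z = meet c (meet x c').

Definition set_eq (P Q : S -> Prop) : Prop := forall z, P z <-> Q z.

Definition simply_cancellative : Prop :=
  forall x y z : S,
    join z (join x z) = join z (join y z) ->
    meet z (meet x z) = meet z (meet y z) -> x = y.

Definition upper_symmetric : Prop :=
  forall x y : S, meet x y = meet y x -> join x y = join y x.

Definition lower_symmetric : Prop :=
  forall x y : S, join x y = join y x -> meet x y = meet y x.

End Defs.

Arguments Drel {S} _ _.
Arguments Dclass {S} _ _.
Arguments join_sand {S} _ _ _.
Arguments meet_sand {S} _ _ _.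
Arguments set_eq {S} _ _.

From Stdlib Require Import Setoid.

(* Both reducts (S, ∧) and (S, ∨) of a skew lattice are bands (idempotent
   semigroups).  In a band write z ≼ x ("z lies below x") for z·x·z = z; this
   is the natural D-preorder, and for a skew lattice  x ∧ y ∧ x = x  holds iff
   y ∨ x ∨ y = y, so the preorders of the two reducts are mutually opposite.

   Part (i) is proved pointwise.  For t in B, the hypothesis B∨x₁∨B = B∨x₂∨B
   and cancellation with x₂ give t∨x₁∨t = t∨x₂∨t.  For c in M, the element
   β = c∨b∨c lies in B and β∧(c∨x∨c)∧β = c for every x in A, so cancellation
   with β gives c∨x₁∨c = c∨x₂∨c; finally c∨x∨c' = (c∨x∨c)∨(c'∨x∨c').
   Part (ii) is part (i) in the dual skew lattice (∧ and ∨ exchanged). *)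

Class Band {T : Type} (op : T -> T -> T) : Prop := {
  band_assoc : forall x y z, op x (op y z) = op (op x y) z;
  band_idem : forall x, op x x = x
}.

#[global] Instance meet_band (S : skew_lattice) : Band (@meet S) :=
  {| band_assoc := @meet_assoc S; band_idem := @meet_idem S |}.
#[global] Instance join_band (S : skew_lattice) : Band (@join S) :=
  {| band_assoc := @join_assoc S; band_idem := @join_idem S |}.

Definition below {T : Type} (op : T -> T -> T) (z x : T) : Prop :=
  op z (op x z) = z.

Section BandTheory.
Context {T : Type} {op : T -> T -> T} {HB : Band op}.
Local Infix "⋅" := op (at level 42, right associativity).
Local Ltac assoc_r := repeat rewrite <- band_assoc.

Lemma idem_l (w r : T) : w ⋅ w ⋅ r = w ⋅ r.
Proof. rewrite band_assoc, band_idem; reflexivity. Qed.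

Lemma idem2_l (x y r : T) : x ⋅ y ⋅ x ⋅ y ⋅ r = x ⋅ y ⋅ r.
Proof. rewrite (band_assoc x y (x ⋅ y ⋅ r)), (band_assoc x y r); apply idem_l. Qed.

Lemma idem2 (x y : T) : x ⋅ y ⋅ x ⋅ y = x ⋅ y.
Proof. rewrite (band_assoc x y (x ⋅ y)); apply band_idem. Qed.

Lemma below_sandwich (p v q : T) : below op (p ⋅ v ⋅ q) v.
Proof.
  unfold below; assoc_r.
  rewrite <- (idem2_l p v).
  transitivity (p ⋅ ((v ⋅ p ⋅ v ⋅ q) ⋅ (v ⋅ p ⋅ v ⋅ q))); [assoc_r; reflexivity|].
  rewrite band_idem; apply idem2_l.
Qed.

(* ≼ is transitive: x = (x·y)·z·(y·x) when x ≼ y ≼ z. *)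
Lemma below_trans (x y z : T) : below op x y -> below op y z -> below op x z.
Proof.
  unfold below at 1 2; intros Hxy Hyz.
  assert (E : (x ⋅ y) ⋅ z ⋅ (y ⋅ x) = x).
  { transitivity (x ⋅ (y ⋅ z ⋅ y) ⋅ x); [assoc_r; reflexivity|].
    rewrite Hyz; exact Hxy. }
  rewrite <- E; apply below_sandwich.
Qed.

Lemma below_op (z x y : T) : below op z x -> below op z y -> below op z (x ⋅ y).
Proof.
  unfold below; intros Hx Hy.
  assert (Ez : z ⋅ x ⋅ z ⋅ y ⋅ z = z) by (rewrite Hy; exact Hx).
  rewrite <- Ez.
  transitivity (z ⋅ x ⋅ z ⋅ ((y ⋅ z ⋅ x) ⋅ (y ⋅ z ⋅ x)) ⋅ z ⋅ y ⋅ z);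
    [assoc_r; reflexivity|].
  rewrite band_idem.
  transitivity ((z ⋅ x ⋅ z ⋅ y) ⋅ (z ⋅ x ⋅ z ⋅ y) ⋅ z); [assoc_r; reflexivity|].
  rewrite idem_l; assoc_r; reflexivity.
Qed.

Lemma below_op_l (x y : T) : below op (x ⋅ y) x.
Proof. pose proof (below_sandwich x x y) as H; rewrite idem_l in H; exact H. Qed.

Lemma below_op_r (x y : T) : below op (x ⋅ y) y.
Proof. pose proof (below_sandwich x y y) as H; rewrite band_idem in H; exact H. Qed.

Lemma below_conj_of (z g x : T) : below op z g -> below op (z ⋅ x ⋅ z) g.
Proof.
  unfold below at 1; intros Hg.
  assert (E : z ⋅ g ⋅ (z ⋅ x ⋅ z) = z ⋅ x ⋅ z).
  { transitivity ((z ⋅ g ⋅ z) ⋅ x ⋅ z); [assoc_r; reflexivity|].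
    rewrite Hg; reflexivity. }
  rewrite <- E; apply below_sandwich.
Qed.

Lemma below_conj (z c : T) : below op z c -> below op z (c ⋅ z ⋅ c).
Proof.
  unfold below; intros Hc.
  transitivity ((z ⋅ c ⋅ z) ⋅ c ⋅ z); [assoc_r; reflexivity|].
  rewrite Hc; exact Hc.
Qed.

Lemma absorb_conj (w c x : T) : w ⋅ c = w -> c ⋅ w = w -> w ⋅ (c ⋅ x ⋅ c) ⋅ w = w ⋅ x ⋅ w.
Proof. intros Hwc Hcw; assoc_r; rewrite Hcw, band_assoc, Hwc; reflexivity. Qed.

Lemma split_sandwich (x c c' : T) :
  below op x c -> below op x c' -> c ⋅ x ⋅ c' = (c ⋅ x ⋅ c) ⋅ (c' ⋅ x ⋅ c').
Proof.
  intros Hc Hc'.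
  pose proof (below_op _ _ _ Hc Hc') as K; unfold below in K.
  transitivity (c ⋅ (x ⋅ (c ⋅ c') ⋅ x) ⋅ c'); [rewrite K; reflexivity|].
  assoc_r; reflexivity.
Qed.

(* The band identity behind the first cancellation: if t ≼ g and t ≼ g', then
   v·(t·g·v·g'·t)·v = v·(t·v·t)·v. *)
Lemma sandwich_absorb (t g g' v : T) :
  below op t g -> below op t g' ->
  v ⋅ (t ⋅ g ⋅ v ⋅ g' ⋅ t) ⋅ v = v ⋅ (t ⋅ v ⋅ t) ⋅ v.
Proof.
  intros Hg Hg'.
  assert (K : below op (t ⋅ v ⋅ t) (g ⋅ v ⋅ g')).
  { apply below_op; [apply below_conj_of; exact Hg|].
    apply below_op; [apply below_sandwich | apply below_conj_of; exact Hg']. }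
  unfold below in K.
  transitivity (v ⋅ ((t ⋅ v ⋅ t) ⋅ (g ⋅ v ⋅ g') ⋅ (t ⋅ v ⋅ t)) ⋅ v);
    [|rewrite K; reflexivity].
  assoc_r; rewrite idem2_l, (idem2 t v); reflexivity.
Qed.

End BandTheory.

Definition dual (S : skew_lattice) : skew_lattice :=
  @SkewLattice (car S) (@join S) (@meet S) (@join_idem S) (@meet_idem S)
    (@join_assoc S) (@meet_assoc S) (@absorb_join_meet S) (@absorb_meet_join S)
    (@absorb_meet_join_r S) (@absorb_join_meet_r S).

(* x ∧ y ∧ x = x implies y ∨ x ∨ y = y: from x ∨ (y ∧ x) = y ∧ x the join
   y ∨ x ∨ (y ∧ x) collapses to y. *)
Lemma below_meet_join {S : skew_lattice} (x y : S) :
  below meet x y -> below join y x.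
Proof.
  unfold below; intros H.
  assert (E1 : join x (meet y x) = meet y x).
  { rewrite <- H at 1; apply absorb_join_meet_r. }
  assert (E2 : join y (join x (meet y x)) = y).
  { rewrite E1; apply absorb_join_meet. }
  rewrite <- E2 at 2; rewrite idem2_l; exact E2.
Qed.

Lemma below_meet_iff_join {S : skew_lattice} (x y : S) :
  below meet x y <-> below join y x.
Proof.
  split; [apply below_meet_join|].
  exact (@below_meet_join (dual S) y x).
Qed.

Lemma Drel_dual (S : skew_lattice) (x y : S) : @Drel (dual S) x y <-> Drel x y.
Proof.
  split; intros [H1 H2]; split; apply below_meet_iff_join; assumption.
Qed.

Lemma join_sand_mono (S : skew_lattice) (C C' : S -> Prop) (x z : S) :
  (forall y, C y -> C' y) -> join_sand C x z -> join_sand C' x z.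
Proof.
  intros HC [c [c' [Hc [Hc' E]]]]; exists c, c'; auto.
Qed.

Lemma join_sand_ext (S : skew_lattice) (C : S -> Prop) (x1 x2 : S) :
  (forall c c', C c -> C c' -> join c (join x1 c') = join c (join x2 c')) ->
  set_eq (join_sand C x1) (join_sand C x2).
Proof.
  intros K z; split; intros [c [c' [Hc [Hc' E]]]]; exists c, c';
    (split; [exact Hc | split; [exact Hc' | subst z]]).
  - apply K; assumption.
  - symmetry; apply K; assumption.
Qed.

Section UpperTransfer.
Variables (S : skew_lattice) (a b x1 x2 : S).
Hypothesis Hsc : simply_cancellative S.
Hypothesis Hx1 : Dclass a x1.
Hypothesis Hx2 : Dclass a x2.
Hypothesis Hset : forall z, join_sand (Dclass b) x1 z -> join_sand (Dclass b) x2 z.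

Local Infix "⊓" := meet (at level 42, right associativity).
Local Infix "⊔" := join (at level 52, right associativity).

Lemma same_class_join (v u w : S) : Dclass v u -> Dclass v w -> below join w u.
Proof.
  intros Hu Hw; apply below_meet_iff_join.
  exact (below_trans _ _ _ (proj1 Hu) (proj2 Hw)).
Qed.

Lemma below_join_sandwich (x p q : S) : below meet x (p ⊔ x ⊔ q).
Proof. apply below_meet_iff_join, below_sandwich. Qed.

Lemma sandwich_in_B (t : S) : Dclass b t -> t ⊔ x1 ⊔ t = t ⊔ x2 ⊔ t.
Proof.
  intros Ht.
  destruct (Hset (t ⊔ x1 ⊔ t)) as [g [g' [Hg [Hg' E]]]].
  { exists t, t; auto. }
  assert (Et : t ⊔ x1 ⊔ t = t ⊔ g ⊔ x2 ⊔ g' ⊔ t).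
  { rewrite <- (absorb_conj t t x1) by apply band_idem.
    rewrite E; repeat rewrite <- join_assoc; reflexivity. }
  rewrite Et; apply (Hsc _ _ x2).
  - apply sandwich_absorb; apply (same_class_join b); assumption.
  - pose proof (below_join_sandwich x2 (t ⊔ g) (g' ⊔ t)) as H1.
    rewrite <- join_assoc in H1.
    pose proof (below_join_sandwich x2 t t) as H2.
    transitivity x2; [exact H1 | symmetry; exact H2].
Qed.

Lemma M_below_a (c : S) : Dclass (a ⊓ b) c -> below meet c a.
Proof. intros Hc; exact (below_trans _ _ _ (proj1 Hc) (below_op_l a b)). Qed.

Lemma M_below_b (c : S) : Dclass (a ⊓ b) c -> below meet c b.
Proof. intros Hc; exact (below_trans _ _ _ (proj1 Hc) (below_op_r a b)). Qed.

Lemma conj_b_in_B (c : S) : Dclass (a ⊓ b) c -> Dclass b (c ⊔ b ⊔ c).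
Proof.
  intros Hc; split; apply below_meet_iff_join.
  - apply below_conj, below_meet_iff_join, M_below_b, Hc.
  - apply below_sandwich.
Qed.

Lemma meet_join_sandwich_l (c y : S) : c ⊓ (c ⊔ y ⊔ c) = c.
Proof. apply absorb_meet_join. Qed.

Lemma meet_join_sandwich_r (c y : S) : (c ⊔ y ⊔ c) ⊓ c = c.
Proof. rewrite (join_assoc _ c y c); apply absorb_meet_join_r. Qed.

(* Step 2: for c in M and x in A, the meet sandwich of c ∨ x ∨ c by
   c ∨ b ∨ c is c itself: it lies below a ∧ b, hence below c, and above c. *)
Lemma meet_sandwich_M (c x : S) : Dclass a x -> Dclass (a ⊓ b) c ->
  (c ⊔ b ⊔ c) ⊓ (c ⊔ x ⊔ c) ⊓ (c ⊔ b ⊔ c) = c.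
Proof.
  intros Hx Hc.
  set (t := c ⊔ b ⊔ c); set (u := c ⊔ x ⊔ c).
  assert (Hua : below meet u a).
  { apply below_meet_iff_join; unfold u.
    pose proof (proj1 (below_meet_iff_join _ _) (M_below_a c Hc)) as Hac.
    pose proof (proj1 (below_meet_iff_join _ _) (proj1 Hx)) as Hax.
    apply below_op; [exact Hac | apply below_op; assumption]. }
  assert (Hqc : below meet (t ⊓ u ⊓ t) c).
  { apply (below_trans _ (a ⊓ b)); [apply below_op | exact (proj2 Hc)].
    - exact (below_trans _ _ _ (below_sandwich t u t) Hua).
    - apply below_conj_of, (conj_b_in_B c Hc). }
  assert (Ecq : c ⊓ (t ⊓ u ⊓ t) = c).
  { unfold t, u; rewrite (meet_assoc _ c), meet_join_sandwich_l,
      (meet_assoc _ c), meet_join_sandwich_l; apply meet_join_sandwich_l. }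
  assert (Eqc : (t ⊓ u ⊓ t) ⊓ c = c).
  { unfold t, u; repeat rewrite <- meet_assoc.
    rewrite !meet_join_sandwich_r; reflexivity. }
  unfold below in Hqc; rewrite <- Hqc, Ecq; exact Eqc.
Qed.

Lemma sandwich_in_M (c : S) : Dclass (a ⊓ b) c -> c ⊔ x1 ⊔ c = c ⊔ x2 ⊔ c.
Proof.
  intros Hc; apply (Hsc _ _ (c ⊔ b ⊔ c)).
  - assert (Hw : forall x, (c ⊔ b ⊔ c) ⊔ (c ⊔ x ⊔ c) ⊔ (c ⊔ b ⊔ c)
                          = (c ⊔ b ⊔ c) ⊔ x ⊔ (c ⊔ b ⊔ c)).
    { intros x; apply absorb_conj; [|apply idem_l].
      rewrite <- !join_assoc; f_equal; f_equal; apply band_idem. }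
    rewrite !Hw; apply sandwich_in_B, conj_b_in_B, Hc.
  - rewrite !meet_sandwich_M by assumption; reflexivity.
Qed.

(* Step 4: for c, c' in M the sandwich c ∨ x ∨ c' splits as
   (c ∨ x ∨ c) ∨ (c' ∨ x ∨ c'), since x in A lies above both c and c'. *)
Lemma sandwich_M_pair (c c' : S) : Dclass (a ⊓ b) c -> Dclass (a ⊓ b) c' ->
  c ⊔ x1 ⊔ c' = c ⊔ x2 ⊔ c'.
Proof.
  intros Hc Hc'.
  assert (HM : forall x d, Dclass a x -> Dclass (a ⊓ b) d -> below join x d).
  { intros x d Hx Hd; apply below_meet_iff_join.
    exact (below_trans _ _ _ (M_below_a d Hd) (proj2 Hx)). }
  rewrite (split_sandwich x1 c c'), (split_sandwich x2 c c') by auto.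
  rewrite (sandwich_in_M c Hc), (sandwich_in_M c' Hc'); reflexivity.
Qed.

End UpperTransfer.

Lemma join_sand_transfer (S : skew_lattice) (a b x1 x2 : S) :
  simply_cancellative S -> Dclass a x1 -> Dclass a x2 ->
  set_eq (join_sand (Dclass b) x1) (join_sand (Dclass b) x2) ->
  set_eq (join_sand (Dclass (meet a b)) x1) (join_sand (Dclass (meet a b)) x2).
Proof.
  intros Hsc Hx1 Hx2 Hset; apply join_sand_ext; intros c c'.
  apply (sandwich_M_pair S a b); try assumption.
  intros z; apply Hset.
Qed.

Lemma meet_sand_transfer (S : skew_lattice) (a b x1 x2 : S) :
  simply_cancellative S -> Dclass a x1 -> Dclass a x2 ->
  set_eq (meet_sand (Dclass b) x1) (meet_sand (Dclass b) x2) ->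
  set_eq (meet_sand (Dclass (join a b)) x1) (meet_sand (Dclass (join a b)) x2).
Proof.
  intros Hsc Hx1 Hx2 Hset.
  assert (Hsc' : simply_cancellative (dual S)).
  { intros x y z H1 H2; exact (Hsc x y z H2 H1). }
  assert (Hclass : forall v y : S, @Dclass (dual S) v y <-> @Dclass S v y).
  { intros v y; apply Drel_dual. }
  apply (join_sand_ext (dual S)); intros c c' Hc Hc'.
  apply (sandwich_M_pair (dual S) a b); try apply Hclass; try assumption.
  intros z Hz.
  apply (join_sand_mono (dual S) (Dclass b)); [intros y; apply Hclass|].
  apply Hset, (join_sand_mono (dual S) (@Dclass (dual S) b)); [|exact Hz].
  intros y; apply Hclass.
Qed.

Theorem mainTheorem12 (S : skew_lattice) (a b x1 x2 : S) :
  simply_cancellative S ->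
  ~ Drel a b -> ~ Drel a (meet a b) -> ~ Drel a (join a b) ->
  ~ Drel b (meet a b) -> ~ Drel b (join a b) ->
  ~ Drel (meet a b) (join a b) ->
  Dclass a x1 -> Dclass a x2 ->
  (upper_symmetric S ->
     set_eq (join_sand (Dclass b) x1) (join_sand (Dclass b) x2) ->
     set_eq (join_sand (Dclass (meet a b)) x1) (join_sand (Dclass (meet a b)) x2))
  /\
  (lower_symmetric S ->
     set_eq (meet_sand (Dclass b) x1) (meet_sand (Dclass b) x2) ->
     set_eq (meet_sand (Dclass (join a b)) x1) (meet_sand (Dclass (join a b)) x2)).
Proof.
  intros Hsc _ _ _ _ _ _ Hx1 Hx2; split; intros _ Hset.
  - apply join_sand_transfer; assumption.
  - apply meet_sand_transfer; assumption.
Qed.
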